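(* Let $G=(V,E,\mathcal{W})$ be a coherent matrix-weighted network as described in the context whose underlying undirected graph is not bipartite, and consider the random walk dynamics $\mathbf{y}_j(t+1)=\sum_i \mathbf{W}_{ij}^T\mathbf{y}_i(t)/d_i$, $j=1,\dots,n$, i.e. $\mathbf{y}(t+1)=\mathcal{P}^T\mathbf{y}(t)$ with $\mathcal{P}=\mathcal{D}^{-1}\mathcal{W}$ and $\mathbf{y}=(\mathbf{y}_1;\dots;\mathbf{y}_n)$, $\mathbf{y}_i\in\mathbb{R}^{n_d}$, with initial vectors $\mathbf{y}_i(0)$. Then for each node $v_j$, $\mathbf{y}_j(t)\to\mathbf{y}_j^*$ as $t\to\infty$, where $$\mathbf{y}_j^{*T}=\bar{\mathbf{y}}(0)^T\mathbf{S}_{1\sigma(j)}\,d_j/(2m),\qquad \bar{\mathbf{y}}(0)^T=\sum_{i=1}^n\mathbf{y}_i(0)^T\mathbf{S}_{\sigma(i)1},\qquad 2m=\sum_j d_j.$$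
   Context: A matrix-weighted network (MWN) is $G=(V,E,\mathcal{W})$ with node set $V=\{v_1,\dots,v_n\}$ and edge set $E\subset V\times V$, whose underlying graph is connected. For a fixed dimension $n_d$, each ordered pair $(i,j)$ carries $\mathbf{W}_{ij}\in\mathbb{R}^{n_d\times n_d}$, with $\mathbf{W}_{ij}=0$ iff $(v_i,v_j)\notin E$, and $\mathbf{W}_{ij}=\mathbf{W}_{ji}^T$. Write $w_{ij}=\|\mathbf{W}_{ij}\|_2$ and, for edges, $\mathbf{R}_{ij}=\mathbf{W}_{ij}/w_{ij}$ (transformation of the edge). $\mathcal{W}$ is the $nn_d\times nn_d$ block matrix with blocks $\mathbf{W}_{ij}$; $d_i=\sum_j w_{ij}$, $\mathcal{D}=\mathrm{diag}(d_i)\otimes\mathbf{I}$ ($\mathbf{I}$ the $n_d\times n_d$ identity). The transformation of a directed path or cycle with consecutive edges $e_1,\dots,e_k$ is $\mathbf{R}(e_1)\cdots\mathbf{R}(e_k)$; $G$ is coherent if every directed cycle $(v_{i_1},v_{i_2}),\dots,(v_{i_l},v_{i_1})$ ($l\ge2$, distinct nodes) has transformation $\mathbf{I}$. For coherent $G$ there is a partition $\{V_1,\dots,V_{l_p}\}$ of $V$ such that edges inside a part have transformation $\mathbf{I}$, all edges from a part $V_a$ to a part $V_b$ share the same transformation, and every directed cycle of parts (as super nodes) has transformation $\mathbf{I}$. For such a partition, $\sigma(i)$ is the index of the part containing $v_i$, and $\mathbf{S}_{hl}$ is the transformation of a directed path from a node of $V_h$ to a node of $V_l$. *)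

From HB Require Import structures.
From mathcomp Require Import all_boot all_order all_algebra.
From mathcomp Require Import all_classical all_reals all_analysis.
Set Implicit Arguments. Unset Strict Implicit. Unset Printing Implicit Defensive.
Import Order.TTheory GRing.Theory Num.Theory.
Import numFieldNormedType.Exports.
Local Open Scope classical_set_scope.
Local Open Scope ring_scope.

Section MWN.
Variables (R : realType) (n nd : nat).
Variable W : 'I_n -> 'I_n -> 'M[R]_nd.

Definition vnorm2 (x : 'cV[R]_nd) : R := Num.sqrt (\sum_k x k 0 ^+ 2).

Definition specnorm (A : 'M[R]_nd) : R :=
  sup [set vnorm2 (A *m x) | x in [set x : 'cV[R]_nd | vnorm2 x <= 1]].

Definition edge : rel 'I_n := fun i j => W i j != 0.

Definition wgt i j : R := specnorm (W i j).

Definition Rtr i j : 'M[R]_nd := (wgt i j)^-1 *: W i j.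

Definition deg i : R := \sum_j wgt i j.

Definition two_m : R := \sum_j deg j.

Fixpoint ptrans (x : 'I_n) (p : seq 'I_n) : 'M[R]_nd :=
  match p with
  | [::] => 1%:M
  | y :: p' => Rtr x y *m ptrans y p'
  end.

Definition mw_symmetric := forall i j, W i j = (W j i)^T.

Definition mw_connected := forall i j, connect edge i j.

Definition mw_bipartite := exists c : 'I_n -> bool,
  forall i j, edge i j -> c i != c j.

Definition coherent := forall (x : 'I_n) (p : seq 'I_n),
  uniq (x :: p) -> (0 < size p)%N -> path edge x p -> edge (last x p) x ->
  ptrans x (rcons p x) = 1%:M.

(* A partition {V_1,...,V_{lp}} given by sigma : V -> parts (part V_1 is
   index ord0), with the properties of the context. *)
Definition coherent_partition (lp : nat) (sigma : 'I_n -> 'I_lp.+1) :=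
  [/\
      forall a, exists i, sigma i = a,
      forall i j, edge i j -> sigma i = sigma j -> Rtr i j = 1%:M,
      forall i j i' j', edge i j -> edge i' j' -> sigma i = sigma i' ->
        sigma j = sigma j' -> Rtr i j = Rtr i' j' &
      (* every directed cycle of (distinct) parts has transformation I:
         s lists one edge from V_{a_t} to V_{a_{t+1}} for each step *)
      forall s : seq ('I_n * 'I_n), (1 < size s)%N ->
        all (fun e => edge e.1 e.2) s ->
        uniq [seq sigma e.1 | e <- s] ->
        cycle (fun e f => sigma e.2 == sigma f.1) s ->
        foldr (fun e M => Rtr e.1 e.2 *m M) 1%:M s = 1%:M].

Definition part_transf (lp : nat) (sigma : 'I_n -> 'I_lp.+1)
  (S : 'I_lp.+1 -> 'I_lp.+1 -> 'M[R]_nd) :=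
  forall (x : 'I_n) (p : seq 'I_n),
    uniq (x :: p) -> path edge x p ->
    ptrans x p = S (sigma x) (sigma (last x p)).

Fixpoint rw (y0 : 'I_n -> 'cV[R]_nd) (t : nat) : 'I_n -> 'cV[R]_nd :=
  match t with
  | 0 => y0
  | t'.+1 => fun j => \sum_i (deg i)^-1 *: ((W i j)^T *m rw y0 t' i)
  end.

End MWN.

From HB Require Import structures.
From mathcomp Require Import all_boot all_order all_algebra.
From mathcomp Require Import all_classical all_reals all_analysis.
From mathcomp Require Import ring lra zify.
Set Implicit Arguments. Unset Strict Implicit. Unset Printing Implicit Defensive.
Import Order.TTheory GRing.Theory Num.Theory.
Import numFieldNormedType.Exports.
Local Open Scope classical_set_scope.
Local Open Scope ring_scope.

(* Write T_i := S_{sigma(i) 1} for the transformation from v_i to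
   the root part.  Coherence makes every edge transformation a gauge change,
   R_ij = T_i T_j^-1, so the weights w_ij are symmetric and the gauged states
   y_i(t)^T T_i evolve, coordinate by coordinate, as the scalar random walk
   x_j(t+1) = sum_i w_ij x_i(t) / d_i.  On a connected non-bipartite graph some
   power of the transition matrix D^-1 W is entrywise positive, so it contracts
   the oscillation of x_i / d_i by a fixed factor (Doeblin); since sum_i x_i is
   conserved, x_j(t) -> d_j / (2m) sum_i x_i(0).  Undoing the gauge with
   T_j^-1 = S_{1 sigma(j)} gives the limit. *)

Section SpectralNorm.
Variables (R : realType) (nd : nat).
Implicit Types (M : 'M[R]_nd) (x : 'cV[R]_nd) (k : R).

Lemma sum_sqr_trmx_mul x : \sum_l x l 0 ^+ 2 = (x^T *m x) 0 0.
Proof. by rewrite mxE; apply: eq_bigr => l _; rewrite mxE expr2. Qed.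

Lemma gram_scalar_ge0 M k : (0 < nd)%N -> M^T *m M = k%:M -> 0 <= k.
Proof.
move=> nd_gt0 /matrixP /(_ (Ordinal nd_gt0) (Ordinal nd_gt0)).
rewrite !mxE eqxx mulr1n => <-; apply: sumr_ge0 => l _.
by rewrite mxE -expr2 sqr_ge0.
Qed.

Lemma vnorm2_mulmx_gram M k x :
  0 <= k -> M^T *m M = k%:M -> vnorm2 (M *m x) = Num.sqrt k * vnorm2 x.
Proof.
move=> k_ge0 MM; rewrite /vnorm2 -sqrtrM // !sum_sqr_trmx_mul.
by rewrite trmx_mul -mulmxA (mulmxA M^T) MM mul_scalar_mx -scalemxAr mxE.
Qed.

Lemma specnorm_gram M k : (0 < nd)%N -> M^T *m M = k%:M -> specnorm M = Num.sqrt k.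
Proof.
move=> nd_gt0 MM; have k_ge0 := gram_scalar_ge0 nd_gt0 MM.
rewrite /specnorm; set E := (X in sup X).
have ubE : ubound E (Num.sqrt k).
  move=> _ [x /= x_le1 <-]; rewrite (vnorm2_mulmx_gram _ k_ge0 MM).
  by rewrite -[leRHS]mulr1 ler_wpM2l ?sqrtr_ge0.
pose e : 'cV[R]_nd := delta_mx (Ordinal nd_gt0) 0.
have e_unit : vnorm2 e = 1.
  rewrite /vnorm2 (bigD1 (Ordinal nd_gt0)) //= big1 ?addr0.
    by rewrite mxE !eqxx expr1n sqrtr1.
  by move=> i /negbTE i_neq; rewrite mxE i_neq expr0n.
have Ek : E (Num.sqrt k).
  by exists e; rewrite /= ?e_unit // (vnorm2_mulmx_gram _ k_ge0 MM) e_unit mulr1.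
apply/eqP; rewrite eq_le ge_sup //=; last by exists (Num.sqrt k).
by apply: sup_upper_bound => //; split; exists (Num.sqrt k).
Qed.

End SpectralNorm.

Section Stochastic.
Variables (R : realType) (n : nat).
Implicit Types (Q : 'M[R]_n) (v : 'cV[R]_n).

Definition stochastic Q := (forall i j, 0 <= Q i j) /\ (forall i, \sum_j Q i j = 1).

Lemma stochastic1 : stochastic 1%:M.
Proof.
split=> [i j|i]; first by rewrite mxE ler0n.
rewrite (bigD1 i) //= big1 ?mxE ?eqxx ?addr0 // => j ji.
by rewrite mxE eq_sym (negbTE ji).
Qed.

Lemma stochasticM Q Q' : stochastic Q -> stochastic Q' -> stochastic (Q *m Q').
Proof.
move=> [Q0 Q1] [Q'0 Q'1]; split=> [i j|i].
  by rewrite mxE; apply: sumr_ge0 => l _; apply: mulr_ge0.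
under eq_bigr do rewrite mxE.
rewrite exchange_big /= -(Q1 i); apply: eq_bigr => l _.
by rewrite -mulr_sumr Q'1 mulr1.
Qed.

Lemma stochasticX Q k : stochastic Q -> stochastic (Q ^+ k).
Proof.
move=> sQ; elim: k => [|k IHk]; first exact: stochastic1.
by rewrite exprS -mulmxE; apply: stochasticM.
Qed.

Lemma stochastic_mulmx_ge Q v m i :
  stochastic Q -> (forall l, m <= v l 0) -> m <= (Q *m v) i 0.
Proof.
move=> [Q0 Q1] v_ge; rewrite mxE -[m]mul1r -(Q1 i) mulr_suml.
by apply: ler_sum => l _; apply: ler_wpM2l.
Qed.

Lemma stochastic_mulmx_le Q v M i l :
  stochastic Q -> (forall l, v l 0 <= M) -> (Q *m v) i 0 <= M - Q i l * (M - v l 0).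
Proof.
move=> [Q0 Q1] v_le.
have -> : (Q *m v) i 0 = M - \sum_l' Q i l' * (M - v l' 0).
  rewrite mxE -{1}[M]mul1r -(Q1 i) mulr_suml -sumrB.
  by apply: eq_bigr => l' _; ring.
rewrite lerD2l lerN2 (bigD1 l) //= lerDl.
by apply: sumr_ge0 => l' _; rewrite mulr_ge0 ?subr_ge0.
Qed.

Definition osc v := \big[Num.max/0]_(ik : 'I_n * 'I_n) (v ik.1 0 - v ik.2 0).

Lemma osc_ge0 v : 0 <= osc v.
Proof. exact: bigmax_ge_id. Qed.

Lemma le_osc v i k : v i 0 - v k 0 <= osc v.
Proof. exact: (le_bigmax _ _ (i, k)). Qed.

Lemma osc_le v B : 0 <= B -> (forall i k, v i 0 - v k 0 <= B) -> osc v <= B.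
Proof. by move=> B_ge0 vB; apply: bigmax_le => // -[i k]. Qed.

(* Doeblin: row [i] puts mass at least [dl] on a minimiser of [v], which keeps
   [(Q *m v) i 0] at least [dl] times the spread of [v] below its maximum. *)
Lemma osc_stochastic_contract Q v dl :
  stochastic Q -> (forall i j, dl <= Q i j) -> dl <= 1 ->
  osc (Q *m v) <= (1 - dl) * osc v.
Proof.
move=> sQ Q_ge dl_le1; apply: osc_le => [|i k].
  by rewrite mulr_ge0 ?osc_ge0 ?subr_ge0.
have [lm _ vlm] := @arg_minP _ R _ i xpredT (fun l => v l 0) erefl.
have [lM _ vlM] := @arg_maxP _ R _ i xpredT (fun l => v l 0) erefl.
have Qi := stochastic_mulmx_le i lm sQ (fun l => vlM l erefl).
have Qk := stochastic_mulmx_ge k sQ (fun l => vlm l erefl).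
have spread := le_osc v lM lm.
have spread_ge0 : 0 <= v lM 0 - v lm 0 by rewrite subr_ge0 vlm.
have := Q_ge i lm; nra.
Qed.

End Stochastic.

Definition bipartite (T : finType) (e : rel T) :=
  exists c : T -> bool, forall i j, e i j -> c i != c j.

Section ConnectedNonBipartite.
Variables (T : finType) (e : rel T).
Hypotheses (e_connected : forall x y, connect e x y) (e_nonbipartite : ~ bipartite e).

Lemma exists_edge : exists x y, e x y.
Proof.
apply: contrapT => no_edge; apply: e_nonbipartite.
by exists (fun _ => true) => x y exy; case: no_edge; exists x, y.
Qed.

Lemma exists_neighbour x : exists y, e x y.
Proof.
have [a [b eab]] := exists_edge.
case/connectP: (e_connected x a) => [[|y p]] /=; first by move=> _ <-; exists b.
by case/andP=> exy _ _; exists y.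
Qed.

End ConnectedNonBipartite.

Section Primitive.
Variables (R : realType) (n : nat) (Q : 'M[R]_n) (e : rel 'I_n).
Hypotheses (Q_ge0 : forall i j, 0 <= Q i j) (Q_gt0 : forall i j, e i j -> 0 < Q i j).
Hypotheses (e_sym : symmetric e) (e_connected : forall x y, connect e x y).
Hypothesis e_nonbipartite : ~ bipartite e.

Definition reachable_in k x y := 0 < (Q ^+ k) x y.

Lemma exprQ_ge0 k x y : 0 <= (Q ^+ k) x y.
Proof.
elim: k x y => [|k IHk] x y; first by rewrite expr0 mxE ler0n.
by rewrite exprS -mulmxE mxE; apply: sumr_ge0 => l _; apply: mulr_ge0.
Qed.

Lemma reachable_in0 x : reachable_in 0 x x.
Proof. by rewrite /reachable_in expr0 mxE eqxx ltr01. Qed.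

Lemma reachable_in1 x y : e x y -> reachable_in 1 x y.
Proof. by rewrite /reachable_in expr1; apply: Q_gt0. Qed.

Lemma reachable_inD a b x u y :
  reachable_in a x u -> reachable_in b u y -> reachable_in (a + b) x y.
Proof.
move=> xu uy; rewrite /reachable_in exprD -mulmxE mxE (bigD1 u) //=.
rewrite ltr_wpDr ?mulr_gt0 //.
by apply: sumr_ge0 => l _; rewrite mulr_ge0 ?exprQ_ge0.
Qed.

Lemma reachable_in_path x p : path e x p -> reachable_in (size p) x (last x p).
Proof.
elim: p x => [|y p IHp] x /=; first by move=> _; apply: reachable_in0.
by case/andP=> exy yp; rewrite -add1n; apply: reachable_inD (reachable_in1 exy) (IHp _ yp).
Qed.

(* Reversing a path gives a walk back of the same length. *)
Lemma reachable_in_both x y : exists k, reachable_in k x y /\ reachable_in k y x.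
Proof.
case/connectP: (e_connected x y) => p xp ->.
exists (size p); split; first exact: reachable_in_path.
have back : path e (last x p) (rev (belast x p)).
  by rewrite rev_path; apply: sub_path xp => a b; rewrite e_sym.
have := reachable_in_path back; rewrite size_rev size_belast.
by case: p {xp back} => [|y0 p] //=; rewrite rev_cons last_rcons.
Qed.

(* Otherwise [x |-> odd (f x)], with [f x] the length of walks between [r] and
   [x], would 2-colour [e]. *)
Lemma odd_closed_walk r : exists k, odd k /\ reachable_in k r r.
Proof.
have [f rf] := choice (reachable_in_both r).
apply: contrapT => no_odd; apply: e_nonbipartite.
exists (fun x => odd (f x)) => x y exy; apply/negP => /eqP fxy; apply: no_odd.
exists (f x + 1 + f y)%N; split.
  by rewrite !oddD fxy; case: (odd (f y)).
exact: reachable_inD (reachable_inD (proj1 (rf x)) (reachable_in1 exy)) (proj2 (rf y)).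
Qed.

Lemma reachable_in_eventually r : exists K, forall k, (K <= k)%N -> reachable_in k r r.
Proof.
have [L [oddL rL]] := odd_closed_walk r.
have [u ru] := exists_neighbour e_connected e_nonbipartite r.
have r2 : reachable_in 2 r r.
  by apply: (@reachable_inD 1 1 _ u); apply: reachable_in1; rewrite // e_sym.
have r_even m : reachable_in m.*2 r r.
  elim: m => [|m IHm]; first exact: reachable_in0.
  by rewrite doubleS -addn2; apply: reachable_inD IHm r2.
exists L => k Lk; have := odd_double_half k; case: (boolP (odd k)) => oddk /= <-.
  have -> : (1 + k./2.*2 = L + (k - L)./2.*2)%N.
    by have := odd_double_half (k - L); rewrite oddB // oddL oddk /=; lia.
  exact: reachable_inD rL (r_even _).
exact: r_even.
Qed.

Lemma exists_positive_power : exists N, forall x y, reachable_in N x y.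
Proof.
have [r _] := exists_edge e_nonbipartite.
have [f rf] := choice (reachable_in_both r).
have [K rK] := reachable_in_eventually r.
pose A := (\max_(x < n) f x)%N.
exists (A.*2 + K)%N => x y.
have [fx fy] : (f x <= A)%N /\ (f y <= A)%N by split; apply: leq_bigmax.
have -> : (A.*2 + K = f x + (A.*2 + K - f x - f y) + f y)%N by lia.
apply: reachable_inD (proj1 (rf y)).
by apply: reachable_inD (proj2 (rf x)) (rK _ _); lia.
Qed.

End Primitive.

Lemma contracting_cvg0 (R : realType) (h : nat -> R) (N : nat) (c : R) :
  (forall t, 0 <= h t) -> (forall t, h t.+1 <= h t) -> 0 <= c < 1 ->
  (forall t, h (t + N)%N <= c * h t) -> h @ \oo --> 0.
Proof.
move=> h_ge0 h_step /andP[c_ge0 c_lt1] h_contract.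
have h_mono s t : (s <= t)%N -> h t <= h s.
  move=> st; rewrite -(subnKC st); elim: (t - s)%N => [|k IHk]; first by rewrite addn0.
  by rewrite addnS (le_trans (h_step _)).
have h_geom q : h (q * N)%N <= c ^+ q * h 0.
  elim: q => [|q IHq]; first by rewrite mul0n expr0 mul1r.
  by rewrite mulSnr exprS -mulrA (le_trans (h_contract _)) // ler_wpM2l.
have geom0 : (fun q => c ^+ q * h 0) @ \oo --> 0.
  by rewrite -(mul0r (h 0)); apply: cvgMr_tmp; apply: cvg_expr; rewrite ger0_norm.
apply/cvgr0Pnorm_le => eps eps_gt0.
have [q _ Hq] := cvgr0_norm_le _ geom0 _ eps_gt0.
exists (q * N)%N => // t /= qN_le_t; rewrite ger0_norm //.
apply: le_trans (h_mono _ _ qN_le_t) _; apply: le_trans (h_geom q) _.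
by have := Hq q (leqnn q); rewrite ger0_norm // mulr_ge0 ?exprn_ge0.
Qed.

Section ScalarRandomWalk.
Variables (R : realType) (n : nat) (w : 'I_n -> 'I_n -> R) (e : rel 'I_n).
Hypotheses (w_ge0 : forall i j, 0 <= w i j) (w_sym : forall i j, w i j = w j i).
Hypothesis w_support : forall i j, (w i j != 0) = e i j.
Hypotheses (e_connected : forall x y, connect e x y) (e_nonbipartite : ~ bipartite e).

Definition wdeg i := \sum_j w i j.

Lemma w_gt0 i j : e i j -> 0 < w i j.
Proof. by rewrite -w_support lt_def w_ge0 andbT. Qed.

Lemma wdeg_gt0 i : 0 < wdeg i.
Proof.
have [u iu] := exists_neighbour e_connected e_nonbipartite i.
by rewrite /wdeg (bigD1 u) //= ltr_wpDr ?w_gt0 //; apply: sumr_ge0.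
Qed.

Definition transition : 'M[R]_n := \matrix_(i, j) (w i j / wdeg i).

Lemma transition_stochastic : stochastic transition.
Proof.
split=> [i j|i]; first by rewrite mxE divr_ge0 // ltW // wdeg_gt0.
under eq_bigr do rewrite mxE.
by rewrite -mulr_suml divff // gt_eqF // wdeg_gt0.
Qed.

Lemma transition_power_contracts :
  exists N c, 0 <= c < 1 /\ forall v, osc (transition ^+ N *m v) <= c * osc v.
Proof.
have [P_ge0 _] := transition_stochastic.
have P_gt0 i j : e i j -> 0 < transition i j.
  by move=> eij; rewrite mxE divr_gt0 ?w_gt0 ?wdeg_gt0.
have e_sym : symmetric e by move=> i j; rewrite -!w_support w_sym.
have [N PN_gt0] := exists_positive_power P_ge0 P_gt0 e_sym e_connected e_nonbipartite.
have [a _] := exists_edge e_nonbipartite.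
have [[i j] _ PN_min] := @arg_minP _ R _ (a, a) xpredT
  (fun ij => (transition ^+ N) ij.1 ij.2) erefl.
set dl := (transition ^+ N) i j in PN_min.
have [PN_ge0 PN_sum] := stochasticX N transition_stochastic.
have dl_le1 : dl <= 1.
  apply: le_trans (PN_min (a, a) erefl) _; rewrite -(PN_sum a) (bigD1 a) //= lerDl.
  exact: sumr_ge0.
have dl_gt0 : 0 < dl := PN_gt0 i j.
exists N, (1 - dl); split; first by apply/andP; split; lra.
move=> v; apply: osc_stochastic_contract => // i' j'.
exact: (PN_min (i', j')).
Qed.

Section Dynamics.
Variable z : nat -> 'I_n -> R.
Hypothesis z_step : forall t j, z t.+1 j = \sum_i w i j / wdeg i * z t i.

Definition density t : 'cV[R]_n := \col_i (z t i / wdeg i).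

Lemma density_step t : density t.+1 = transition *m density t.
Proof.
apply/matrixP => j c; rewrite !mxE z_step mulr_suml; apply: eq_bigr => i _.
by rewrite !mxE w_sym; ring.
Qed.

Lemma density_iter t k : density (t + k)%N = transition ^+ k *m density t.
Proof.
elim: k => [|k IHk]; first by rewrite addn0 expr0 mul1mx.
by rewrite addnS density_step IHk mulmxA mulmxE -exprS.
Qed.

Lemma sum_z_conserved t : \sum_i z t i = \sum_i z 0 i.
Proof.
elim: t => [//|t <-]; under eq_bigr do rewrite z_step.
rewrite exchange_big /=; apply: eq_bigr => i _.
by rewrite -!mulr_suml divff ?mul1r // gt_eqF // wdeg_gt0.
Qed.

Lemma z_dist_le_osc t j :
  `|z t j - wdeg j / (\sum_i wdeg i) * \sum_i z 0 i| <= wdeg j * osc (density t).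
Proof.
set D := \sum_i wdeg i.
have dj_gt0 := wdeg_gt0 j.
have D_gt0 : 0 < D.
  by rewrite /D (bigD1 j) //= ltr_wpDr //; apply: sumr_ge0 => i _; rewrite ltW ?wdeg_gt0.
set pi := fun i => wdeg i / D.
have pi_ge0 i : 0 <= pi i by rewrite divr_ge0 ?ltW ?wdeg_gt0.
have pi_sum : \sum_i pi i = 1 by rewrite -mulr_suml divff // gt_eqF.
have pi_expand : \sum_i pi i * (density t j 0 - density t i 0) =
    z t j / wdeg j - (\sum_i z t i) / D.
  rewrite (eq_bigr (fun i => pi i * density t j 0 - z t i / D)) => [|i _].
    by rewrite sumrB -mulr_suml pi_sum mul1r -mulr_suml mxE.
  by rewrite /pi !mxE; field; rewrite !gt_eqF ?wdeg_gt0.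
have -> : z t j - wdeg j / D * \sum_i z 0 i =
    wdeg j * \sum_i pi i * (density t j 0 - density t i 0).
  by rewrite pi_expand (sum_z_conserved t); field; rewrite !gt_eqF.
rewrite normrM gtr0_norm // ler_pM2l // ler_norml -[osc _]mul1r -pi_sum mulr_suml.
rewrite -sumrN; apply/andP; split; apply: ler_sum => i _.
  by rewrite -mulrN ler_wpM2l // lerNl opprB le_osc.
by rewrite ler_wpM2l // le_osc.
Qed.

Lemma osc_density_cvg0 : osc (density t) @[t --> \oo] --> 0.
Proof.
have [N [c [c01 contract]]] := transition_power_contracts.
have [P_ge0 _] := transition_stochastic.
apply: (@contracting_cvg0 _ _ N c) => // [t|t|t]; first exact: osc_ge0.
  rewrite density_step -[leRHS]mul1r -[1 in leRHS]subr0.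
  exact: (osc_stochastic_contract (density t) transition_stochastic P_ge0 ler01).
by rewrite density_iter.
Qed.

Theorem random_walk_cvg j :
  z t j @[t --> \oo] --> wdeg j / (\sum_i wdeg i) * \sum_i z 0 i.
Proof.
have dj_gt0 := wdeg_gt0 j.
apply/cvgrPdist_le => eps eps_gt0.
apply: filterS (cvgr0_norm_le _ osc_density_cvg0 _ (divr_gt0 eps_gt0 dj_gt0)) => t.
rewrite ger0_norm ?osc_ge0 // => osc_small.
rewrite distrC (le_trans (z_dist_le_osc t j)) //.
apply: le_trans (ler_wpM2l (ltW dj_gt0) osc_small) _.
by rewrite mulrCA divff ?mulr1 // gt_eqF.
Qed.

End Dynamics.
End ScalarRandomWalk.

Lemma ptrans_cat (R : realType) (n nd : nat) (W : 'I_n -> 'I_n -> 'M[R]_nd) x p q :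
  ptrans W x (p ++ q) = ptrans W x p *m ptrans W (last x p) q.
Proof.
elim: p x => [|y p IHp] x /=; first by rewrite mul1mx.
by rewrite IHp mulmxA.
Qed.

Section CoherentGauge.
Variables (R : realType) (n nd : nat) (W : 'I_n -> 'I_n -> 'M[R]_nd).
Variables (lp : nat) (sigma : 'I_n -> 'I_lp.+1) (S : 'I_lp.+1 -> 'I_lp.+1 -> 'M[R]_nd).
Hypotheses (W_sym : mw_symmetric W) (W_connected : mw_connected W).
Hypotheses (W_coherent : coherent W) (sigma_partition : coherent_partition W sigma).
Hypothesis S_transf : part_transf W sigma S.
Variable r : 'I_n.
Hypothesis r_root : sigma r = ord0.

Lemma edge_sym : symmetric (edge W).
Proof. by move=> i j; rewrite /edge (W_sym i j) -[X in _ != X]trmx0 (inj_eq trmx_inj). Qed.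

Lemma exists_uniq_path x y :
  exists p, [/\ uniq (x :: p), path (edge W) x p & last x p = y].
Proof.
case/connectP: (W_connected x y) => p xp ->.
by case: (shortenP xp) => p' xp' p'_uniq _; exists p'.
Qed.

Definition to_root i := S (sigma i) ord0.
Definition from_root i := S ord0 (sigma i).

(* Close a simple path from [j] to the root with the edge [(i, j)]: either it
   stays simple, or it passes through [i] and splits off a simple cycle. *)
Lemma Rtr_to_root i j : edge W i j -> Rtr W i j *m to_root j = to_root i.
Proof.
move=> eij; have [_ Rtr_in _ _] := sigma_partition.
have [p [jp_uniq jp jp_last]] := exists_uniq_path j r.
have Sj : ptrans W j p = to_root j by rewrite (S_transf jp_uniq jp) jp_last r_root.
have [eq_ij|neq_ij] := eqVneq i j.
  by move: eij; rewrite eq_ij => ejj; rewrite (Rtr_in j j ejj erefl) mul1mx.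
have [ip|notin_ip] := boolP (i \in p); last first.
  have ijp_uniq : uniq (i :: j :: p) by rewrite /= inE negb_or neq_ij notin_ip.
  have ijp : path (edge W) i (j :: p) by rewrite /= eij.
  have := S_transf ijp_uniq ijp; rewrite /= Sj => ->.
  by rewrite jp_last r_root.
move: jp_uniq jp jp_last Sj; case/splitPr: ip => p1 p2 jp_uniq jp jp_last Sj.
rewrite cat_path /= in jp; case/and3P: jp => jp1 p1i ip2.
have ip2_uniq : uniq (i :: p2).
  by move: jp_uniq; rewrite cons_uniq cat_uniq => /andP[_ /and3P[_ _ ->]].
have Si : ptrans W i p2 = to_root i.
  by rewrite /to_root (S_transf ip2_uniq ip2) -r_root -jp_last last_cat.
have cycle_uniq : uniq (i :: j :: p1).
  move: jp_uniq; rewrite cons_uniq mem_cat negb_or cat_uniq.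
  move=> /andP[/andP[j_p1 _] /and3P[p1_uniq /hasPn p2_p1 _]].
  rewrite !cons_uniq p1_uniq inE negb_or neq_ij j_p1 !andbT /=.
  by apply: (p2_p1 i); rewrite inE eqxx.
have ijp1 : path (edge W) i (j :: p1) by rewrite /= eij.
have /= cycle1 := W_coherent cycle_uniq erefl ijp1 p1i.
by rewrite -Sj -Si -cat_rcons ptrans_cat last_rcons mulmxA cycle1 mul1mx.
Qed.

Lemma ptrans_to_root x p :
  path (edge W) x p -> ptrans W x p *m to_root (last x p) = to_root x.
Proof.
elim: p x => [|y p IHp] x /=; first by rewrite mul1mx.
by case/andP=> exy yp; rewrite -mulmxA IHp // Rtr_to_root.
Qed.

Lemma to_root_root : to_root r = 1%:M.
Proof. by rewrite /to_root -r_root -(S_transf (x := r) (p := [::])). Qed.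

Lemma from_rootK j : from_root j *m to_root j = 1%:M.
Proof.
have [p [rp_uniq rp rp_last]] := exists_uniq_path r j.
by rewrite -to_root_root -(ptrans_to_root rp) (S_transf rp_uniq rp) rp_last r_root.
Qed.

Lemma to_rootK j : to_root j *m from_root j = 1%:M.
Proof. exact: mulmx1C (from_rootK j). Qed.

Lemma Rtr_gauge i j : edge W i j -> Rtr W i j = to_root i *m from_root j.
Proof. by move=> eij; rewrite -(Rtr_to_root eij) -mulmxA to_rootK mulmx1. Qed.

Hypothesis nd_gt0 : (0 < nd)%N.

Lemma wgt_edge_neq0 i j : edge W i j -> wgt W i j != 0.
Proof.
move=> eij; apply/eqP => w0.
have : Rtr W i j *m (to_root j *m from_root i) = 1%:M.
  by rewrite Rtr_gauge // mulmxA -(mulmxA (to_root i)) from_rootK mulmx1 to_rootK.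
rewrite /Rtr w0 invr0 scale0r mul0mx.
move/matrixP/(_ (Ordinal nd_gt0) (Ordinal nd_gt0)); rewrite !mxE eqxx /=.
by move/eqP; rewrite eq_sym oner_eq0.
Qed.

Lemma W_gauge i j : edge W i j -> W i j = wgt W i j *: (to_root i *m from_root j).
Proof.
move=> eij; rewrite -Rtr_gauge // /Rtr scalerA divff ?scale1r //.
exact: wgt_edge_neq0.
Qed.

Lemma W_eq0 i j : ~~ edge W i j -> W i j = 0.
Proof. by rewrite negbK => /eqP. Qed.

Lemma wgt_eq0 i j : ~~ edge W i j -> wgt W i j = 0.
Proof.
move=> /W_eq0 W0; rewrite /wgt W0 (@specnorm_gram _ _ _ 0) ?sqrtr0 //.
by rewrite trmx0 mul0mx -scalemx1 scale0r.
Qed.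

Lemma W_gram i j : edge W i j -> (W i j)^T *m W i j = (wgt W j i * wgt W i j)%:M.
Proof.
move=> eij; have eji : edge W j i by rewrite edge_sym.
rewrite -W_sym (W_gauge eij) (W_gauge eji) -scalemxAl -scalemxAr scalerA.
by rewrite mulmxA -(mulmxA (to_root j)) from_rootK mulmx1 to_rootK scalemx1.
Qed.

Lemma wgt_sym i j : wgt W i j = wgt W j i.
Proof.
have [eij|not_eij] := boolP (edge W i j); last first.
  by rewrite !wgt_eq0 // edge_sym.
have eji : edge W j i by rewrite edge_sym.
by rewrite /wgt (specnorm_gram nd_gt0 (W_gram eij)) (specnorm_gram nd_gt0 (W_gram eji)) mulrC.
Qed.

Lemma wgt_ge0 i j : 0 <= wgt W i j.
Proof.
have [eij|not_eij] := boolP (edge W i j); last by rewrite wgt_eq0.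
by rewrite /wgt (specnorm_gram nd_gt0 (W_gram eij)) sqrtr_ge0.
Qed.

Lemma wgt_neq0 i j : (wgt W i j != 0) = edge W i j.
Proof.
have [eij|not_eij] := boolP (edge W i j); first exact: wgt_edge_neq0.
by rewrite wgt_eq0 ?eqxx.
Qed.

Lemma W_to_root i k : W i k *m to_root k = wgt W i k *: to_root i.
Proof.
have [eik|not_eik] := boolP (edge W i k); last first.
  by rewrite W_eq0 // wgt_eq0 // mul0mx scale0r.
by rewrite (W_gauge eik) -scalemxAl -mulmxA from_rootK mulmx1.
Qed.

Lemma rw_gauge_step y0 t k :
  (rw W y0 t.+1 k)^T *m to_root k =
  \sum_i (wgt W i k / deg W i) *: ((rw W y0 t i)^T *m to_root i).
Proof.
rewrite /= linear_sum mulmx_suml; apply: eq_bigr => i _ /=.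
rewrite linearZ /= trmx_mul trmxK -scalemxAl -mulmxA W_to_root.
by rewrite -scalemxAr scalerA mulrC.
Qed.

Lemma rw_gauge_cvg y0 j c : ~ bipartite (edge W) ->
  ((rw W y0 t j)^T *m to_root j) 0 c @[t --> \oo] -->
  deg W j / two_m W * (\sum_i (y0 i)^T *m to_root i) 0 c.
Proof.
move=> W_nonbipartite; rewrite summxE.
pose z t i := ((rw W y0 t i)^T *m to_root i) 0 c.
have z_step t k : z t.+1 k = \sum_i wgt W i k / deg W i * z t i.
  by rewrite /z rw_gauge_step summxE; apply: eq_bigr => i _; rewrite mxE.
exact: (random_walk_cvg wgt_ge0 wgt_sym wgt_neq0 W_connected W_nonbipartite z_step).
Qed.

End CoherentGauge.

Lemma cvg_rV_mulmx (R : realType) (T : Type) (F : set_system T) (FF : Filter F)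
  m p (u : T -> 'rV[R]_m) (l : 'rV[R]_m) (A : 'M[R]_(m, p)) :
  (forall c, u x 0 c @[x --> F] --> l 0 c) -> u x *m A @[x --> F] --> l *m A.
Proof.
move=> u_cvg; rewrite mulmx_sum_row; under eq_cvg do rewrite mulmx_sum_row.
apply: cvg_big => [|c _]; first exact: add_continuous.
exact: cvgZr_tmp.
Qed.

Theorem proposition4 (R : realType) (n nd : nat) (W : 'I_n -> 'I_n -> 'M[R]_nd)
  (lp : nat) (sigma : 'I_n -> 'I_lp.+1) (S : 'I_lp.+1 -> 'I_lp.+1 -> 'M[R]_nd)
  (y0 : 'I_n -> 'cV[R]_nd) :
  mw_symmetric W -> mw_connected W -> ~ mw_bipartite W -> coherent W ->
  coherent_partition W sigma -> part_transf W sigma S ->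
  let ybarT := \sum_i (y0 i)^T *m S (sigma i) ord0 in
  forall j : 'I_n,
    (fun t => (rw W y0 t j)^T) @ \oo -->
      (deg W j / two_m W) *: (ybarT *m S ord0 (sigma j)).
Proof.
move=> W_sym W_connected W_nonbipartite W_coherent sigma_partition S_transf ybarT j.
have [nd0|nd_gt0] := posnP nd.
  apply: cvg_near_cst; apply: nearW => t; apply/rowP => -[c c_lt].
  by exfalso; move: c_lt; rewrite nd0.
have [parts_nonempty _ _ _] := sigma_partition.
have [r r_root] := parts_nonempty ord0.
have gauge t : (rw W y0 t j)^T =
    (rw W y0 t j)^T *m to_root sigma S j *m from_root sigma S j.
  by rewrite -mulmxA (to_rootK W_connected W_coherent sigma_partition S_transf r_root) mulmx1.
under eq_cvg do rewrite gauge.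
rewrite /ybarT scalemxAl; apply: cvg_rV_mulmx => c.
rewrite [X in _ --> X]mxE.
exact: (rw_gauge_cvg W_sym W_connected W_coherent sigma_partition S_transf r_root nd_gt0).
Qed.
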